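(* For the two-pathogen model described in the context with no spillover ($s=0$) and positive parameters, if $\mathcal{R}_{0,A}>1$ and $\mathcal{R}_{0,B}>1$, then the endemic equilibrium $(S_A,I_A,\widetilde I_A,S_B,I_B,\widetilde I_B)=\bigl(1-\bar I_A-\tfrac{\tau_R}{\tau_I}\bar I_A,\ \bar I_A,\ \bar I_A,\ 1-\bar I_B-\tfrac{\tau_R}{\tau_I}\bar I_B,\ \bar I_B,\ \bar I_B\bigr)$ of the reduced system is locally asymptotically stable.
   Context: Model with no spillover: for $i\in\{A,B\}$, state variables $S_i,I_i,R_i,\widetilde I_i$ satisfy $\dot S_i=-\beta_{0,i}e^{-k\widetilde I_i} S_iI_i+R_i/\tau_R$, $\dot I_i=\beta_{0,i}e^{-k\widetilde I_i}S_iI_i-I_i/\tau_I$, $\dot R_i=I_i/\tau_I-R_i/\tau_R$, $\dot{\widetilde I}_i=(I_i-\widetilde I_i)/\tau_P$, with $S_i+I_i+R_i=1$. All parameters $\beta_{0,A},\beta_{0,B},\tau_I,\tau_R,\tau_P,k$ are positive. $\mathcal{R}_{0,i}=\beta_{0,i}\tau_I$. For $\mathcal{R}_{0,i}>1$, $\bar I_i$ denotes the unique positive solution of $e^{kI}=\beta_{0,i}\tau_I-\beta_{0,i}(\tau_I+\tau_R)I$. The reduced system is obtained by substituting $R_i=1-S_i-I_i$ and keeping only the equations for $S_i,I_i,\widetilde I_i$. Locally asymptotically stable means all eigenvalues of the Jacobian of the reduced system at the equilibrium have negative real part. *)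

From HB Require Import structures.
From mathcomp Require Import all_boot all_order all_algebra.
From mathcomp Require Import all_classical all_reals all_analysis.
From mathcomp Require Import complex.
Set Implicit Arguments. Unset Strict Implicit. Unset Printing Implicit Defensive.
Import Order.TTheory GRing.Theory Num.Theory.
Local Open Scope ring_scope.

(* Right-hand sides of the reduced one-pathogen system, R = 1 - S - I. *)
Definition dS {R : realType} (beta tauR k S I It : R) : R :=
  - (beta * expR (- (k * It)) * S * I) + (1 - S - I) / tauR.
Definition dI {R : realType} (beta tauI k S I It : R) : R :=
  beta * expR (- (k * It)) * S * I - I / tauI.
Definition dIt {R : realType} (tauP I It : R) : R := (I - It) / tauP.

Definition field {R : realType} (betaA betaB tauI tauR tauP k : R)
  (x : 'rV[R]_6) : 'rV[R]_6 :=
  let SA := x ord0 (inord 0) in let IA := x ord0 (inord 1) in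
  let ItA := x ord0 (inord 2) in let SB := x ord0 (inord 3) in
  let IB := x ord0 (inord 4) in let ItB := x ord0 (inord 5) in
  \row_(i < 6)
    [:: dS betaA tauR k SA IA ItA; dI betaA tauI k SA IA ItA; dIt tauP IA ItA;
        dS betaB tauR k SB IB ItB; dI betaB tauI k SB IB ItB; dIt tauP IB ItB]`_i.

Definition jacobian {R : realType} (f : 'rV[R]_6 -> 'rV[R]_6) (x : 'rV[R]_6)
  : 'M[R]_6 :=
  \matrix_(i < 6, j < 6)
     derive1 (fun t : R => f (x + t *: delta_mx ord0 j) ord0 i) 0.

Definition all_eigs_neg_re {R : realType} (A : 'M[R]_6) : Prop :=
  forall z : R[i], eigenvalue (map_mx (fun a : R => (a%:C)%C) A) z -> complex.Re z < 0.

Definition loc_asymp_stable {R : realType} (f : 'rV[R]_6 -> 'rV[R]_6)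
  (x : 'rV[R]_6) : Prop := all_eigs_neg_re (jacobian f x).

Definition endemic_eq {R : realType} (tauI tauR IA IB : R) : 'rV[R]_6 :=
  \row_(i < 6)
    [:: 1 - IA - tauR / tauI * IA; IA; IA; 1 - IB - tauR / tauI * IB; IB; IB]`_i.

From Pilot Require Import Defs.
From HB Require Import structures.
From mathcomp Require Import all_boot all_order all_algebra.
From mathcomp Require Import all_classical all_reals all_analysis.
From mathcomp Require Import complex.
From mathcomp Require Import ring lra.
Import Order.TTheory GRing.Theory Num.Theory.
Local Open Scope ring_scope.
Local Open Scope complex_scope.

(* Without spillover the Jacobian at the endemic equilibrium is block diagonal,
   one 3x3 block per pathogen, so it suffices to show that each block is Hurwitz.
   At the equilibrium [beta e^(-k I) S = 1/tauI], which kills the I-I entry of the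
   block; its characteristic polynomial then has positive coefficients satisfying
   the Routh-Hurwitz condition [a0 < a2 a1], which forces its roots into the open
   left half-plane. *)

Lemma eigenvalue_block_diag (F : fieldType) m n (A : 'M[F]_m) (B : 'M[F]_n) z :
  eigenvalue (block_mx A 0 0 B) z -> eigenvalue A z \/ eigenvalue B z.
Proof.
move=> /eigenvalueP[v]; rewrite -[v]hsubmxK mul_row_block !mulmx0 addr0 add0r.
rewrite scale_row_mx => /eq_row_mx[vA vB] v_neq0.
have [lv0|lv_neq0] := eqVneq (lsubmx v) 0; last first.
  by left; apply/eigenvalueP; exists (lsubmx v).
right; apply/eigenvalueP; exists (rsubmx v) => //.
by apply: contraNneq v_neq0 => rv0; rewrite lv0 rv0 row_mx0.
Qed.

Section EndemicBlock.
Variable R : rcfType.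

Lemma cubic_root_Re_lt0 (a2 a1 a0 : R) (z : R[i]) :
  0 < a2 -> 0 < a0 -> a0 < a2 * a1 ->
  z ^+ 3 + a2%:C * z ^+ 2 + a1%:C * z + a0%:C = 0 -> complex.Re z < 0.
Proof.
move=> a2_gt0 a0_gt0 a0_lt; have a1_gt0 : 0 < a1 by nra.
case: z => x y /=; rewrite !exprS expr0 !mulr1.
move/eqP; rewrite eq_complex /= => /andP[/eqP re0 /eqP im0].
rewrite ltNge; apply/negP => x_ge0.
have /eqP : y * (3 * x * x - y * y + 2 * a2 * x + a1) = 0 by rewrite -im0; ring.
rewrite mulf_eq0 => /orP[/eqP y0|/eqP im_factor0]; first by subst y; nra.
have yy : y * y = 3 * x * x + 2 * a2 * x + a1 by lra.
have : a0 - a1 * a2 - 2 * (a1 + a2 * a2) * x - 8 * a2 * x * x - 8 * x * x * x = 0.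
  rewrite -re0.
  have -> : y * (x * y + y * x) = 2 * x * (y * y) by ring.
  have -> : x * (x * x - y * y) = x * x * x - x * (y * y) by ring.
  have -> : a2 * (x * x - y * y) = a2 * x * x - a2 * (y * y) by ring.
  rewrite yy; ring.
nra.
Qed.

Lemma real_complex_neq0 (r : R) : 0 < r -> r%:C != 0.
Proof.
by move=> r_gt0; rewrite -(rmorph0 (real_complex R)) (inj_eq (@complexI _)) gt_eqF.
Qed.

(* The equations [w J = z w] for the Jacobian block of one pathogen at its
   endemic equilibrium, with [a = beta e^(-k I) I], [u = 1/tauI], [v = 1/tauR],
   [c = k I/tauI] and [p = 1/tauP]. *)
Lemma endemic_eigensystem_trivial_or_Re_lt0 (a u v c p : R) (z w0 w1 w2 : R[i]) :
  0 < a -> 0 < u -> 0 < v -> 0 < c -> 0 < p ->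
  a%:C * w1 - (a + v)%:C * w0 = z * w0 ->
  p%:C * w2 - (u + v)%:C * w0 = z * w1 ->
  c%:C * (w0 - w1) - p%:C * w2 = z * w2 ->
  (w0 = 0 /\ w1 = 0 /\ w2 = 0) \/ complex.Re z < 0.
Proof.
move=> a_gt0 u_gt0 v_gt0 c_gt0 p_gt0 eq0 eq1 eq2.
set b1 := c * p + a * p + v * p + a * u + a * v.
set b0 := v * c * p + a * (u + v) * p.
have char_w0 : (z ^+ 3 + (p + a + v)%:C * z ^+ 2 + b1%:C * z + b0%:C) * w0 =
    - (a%:C * (p%:C * (c%:C * (w0 - w1) - p%:C * w2 - z * w2)
               + (z + p%:C) * (p%:C * w2 - (u + v)%:C * w0 - z * w1))
       + ((z + p%:C) * z + p%:C * c%:C) * (a%:C * w1 - (a + v)%:C * w0 - z * w0)).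
  by rewrite /b1 /b0 !(rmorphD, rmorphM); ring.
rewrite eq0 eq1 eq2 !subrr !(mulr0, addr0) oppr0 in char_w0.
move/eqP: char_w0; rewrite mulf_eq0 => /orP[/eqP char0|/eqP w00].
  right; apply: cubic_root_Re_lt0 char0.
  - by do ![apply: addr_gt0].
  - by rewrite /b0; do ![apply: addr_gt0 | apply: mulr_gt0].
  (* Routh-Hurwitz condition: every monomial of [b0] occurs in [(p + a + v) b1]. *)
  rewrite -subr_gt0 (_ : _ - b0 = p * (c * p + a * p + v * p) + a * b1
                                 + v * (a * p + v * p + a * u + a * v)); last first.
    by rewrite /b0 /b1; ring.
  by rewrite /b1; do ![apply: addr_gt0 | apply: mulr_gt0].
left; rewrite w00 !mulr0 !subr0 in eq0 eq1.
have w10 : w1 = 0 by apply: (mulfI (real_complex_neq0 _ a_gt0)); rewrite mulr0.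
rewrite w10 mulr0 in eq1.
by do !split => //; apply: (mulfI (real_complex_neq0 _ p_gt0)); rewrite mulr0.
Qed.

End EndemicBlock.

Section SIRS.
Variable R : realType.

Lemma derive1_dS (beta tauR k S I It u v w : R) :
  derive1 (fun t => dS beta tauR k (S + t * u) (I + t * v) (It + t * w)) 0 =
  (- (beta * expR (- (k * It)) * I) - tauR^-1) * u
  + (- (beta * expR (- (k * It)) * S) - tauR^-1) * v
  + beta * expR (- (k * It)) * S * I * k * w.
Proof.
rewrite derive1E /dS; apply: derive_val; apply: is_derive_eq.
by rewrite /GRing.scale /= !(mul0r, addr0); ring.
Qed.

Lemma derive1_dI (beta tauI k S I It u v w : R) :
  derive1 (fun t => dI beta tauI k (S + t * u) (I + t * v) (It + t * w)) 0 =
  beta * expR (- (k * It)) * I * u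
  + (beta * expR (- (k * It)) * S - tauI^-1) * v
  - beta * expR (- (k * It)) * S * I * k * w.
Proof.
rewrite derive1E /dI; apply: derive_val; apply: is_derive_eq.
by rewrite /GRing.scale /= !(mul0r, addr0); ring.
Qed.

Lemma derive1_dIt (tauP I It v w : R) :
  derive1 (fun t => dIt tauP (I + t * v) (It + t * w)) 0 =
  tauP^-1 * v - tauP^-1 * w.
Proof.
rewrite derive1E /dIt; apply: derive_val; apply: is_derive_eq.
by rewrite /GRing.scale /= !(mul0r, addr0); ring.
Qed.

Definition sirs_jacobian (beta tauI tauR tauP k S I It : R) : 'M[R]_3 :=
  let g := beta * expR (- (k * It)) in
  \matrix_(i, j) nth 0 (nth [::]
    [:: [:: - (g * I) - tauR^-1; - (g * S) - tauR^-1; g * S * I * k];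
        [:: g * I; g * S - tauI^-1; - (g * S * I * k)];
        [:: 0; tauP^-1; - tauP^-1]] i) j.

Lemma jacobian_field betaA betaB tauI tauR tauP k (x : 'rV[R]_6) :
  Defs.jacobian (field betaA betaB tauI tauR tauP k) x =
  block_mx
    (sirs_jacobian betaA tauI tauR tauP k (x ord0 (inord 0)) (x ord0 (inord 1)) (x ord0 (inord 2))) 0
    0 (sirs_jacobian betaB tauI tauR tauP k (x ord0 (inord 3)) (x ord0 (inord 4)) (x ord0 (inord 5))).
Proof.
apply/matrixP => i j; rewrite /Defs.jacobian !mxE.
have line t m : (x + t *: delta_mx ord0 j) ord0 m = x ord0 m + t * (m == j)%:R.
  by rewrite !mxE eqxx.
under eq_fun do rewrite /field mxE !line.
have inordE m : (m < 6)%N -> (inord m == j) = (m == j :> nat).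
  by move=> m_lt6; rewrite -val_eqE /= inordK.
rewrite !inordE //.
case: (@split_ordP 3 3 i) => i' ->; rewrite mxE;
  case: (@split_ordP 3 3 j) => j' ->; rewrite ?mxE;
  case: i' => [[|[|[|//]]] ?]; case: j' => [[|[|[|//]]] ?] /=;
  rewrite ?derive1_dS ?derive1_dI ?derive1_dIt /=; ring.
Qed.

Lemma endemic_balance (beta tauI tauR k I : R) : 0 < tauI ->
  expR (k * I) = beta * tauI - beta * (tauI + tauR) * I ->
  beta * expR (- (k * I)) * (1 - I - tauR / tauI * I) = tauI^-1.
Proof.
move=> tauI_gt0 eq_I; set S := 1 - I - tauR / tauI * I.
have expS : expR (k * I) = beta * tauI * S by rewrite eq_I /S; field; lra.
have betaS_neq0 : beta * tauI * S != 0 by rewrite -expS gt_eqF ?expR_gt0.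
rewrite expRN expS; field.
by move: betaS_neq0; rewrite !mulf_eq0 !negb_or => /andP[/andP[-> ->] ->].
Qed.

Lemma sirs_jacobian_eigenvalue_Re_lt0 (beta tauI tauR tauP k S I It : R) (z : R[i]) :
  0 < beta -> 0 < tauI -> 0 < tauR -> 0 < tauP -> 0 < k -> 0 < I ->
  beta * expR (- (k * It)) * S = tauI^-1 ->
  eigenvalue (map_mx (real_complex R) (sirs_jacobian beta tauI tauR tauP k S I It)) z ->
  complex.Re z < 0.
Proof.
move=> beta_gt0 tauI_gt0 tauR_gt0 tauP_gt0 k_gt0 I_gt0 balance /eigenvalueP[w wJ w_neq0].
have col j : \sum_i w ord0 i * (sirs_jacobian beta tauI tauR tauP k S I It i j)%:C
             = z * w ord0 j.
  move: (congr1 (fun M : 'rV[R[i]]_3 => M ord0 j) wJ); rewrite !mxE => <-.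
  by apply: eq_bigr => i _; rewrite !mxE.
move: (col ord0) (col (lift ord0 ord0)) (col (lift ord0 (lift ord0 ord0))).
rewrite !big_ord_recl !big_ord0 !mxE /= balance.
set g := beta * expR (- (k * It)); set w0 := w ord0 ord0.
set w1 := w ord0 (lift ord0 ord0); set w2 := w ord0 (lift ord0 (lift ord0 ord0)).
move=> col0 col1 col2.
have gI_gt0 : 0 < g * I by rewrite !mulr_gt0 ?expR_gt0.
have c_gt0 : 0 < tauI^-1 * I * k by rewrite !mulr_gt0 ?invr_gt0.
have [u_gt0 v_gt0 p_gt0] : [/\ 0 < tauI^-1, 0 < tauR^-1 & 0 < tauP^-1].
  by rewrite !invr_gt0.
have [[w00 [w10 w20]]|//] : (w0 = 0 /\ w1 = 0 /\ w2 = 0) \/ complex.Re z < 0.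
  apply: (@endemic_eigensystem_trivial_or_Re_lt0 _ (g * I) tauI^-1 tauR^-1
            (tauI^-1 * I * k) tauP^-1) => //.
  - by rewrite -col0 !(rmorphB, rmorphN, rmorphD, rmorph0); ring.
  - by rewrite -col1 !(rmorphB, rmorphN, rmorphD, rmorph0); ring.
  - by rewrite -col2 !(rmorphB, rmorphN, rmorphD, rmorph0); ring.
case/negP: w_neq0; apply/eqP/rowP => -[[|[|[|//]]] i_lt]; rewrite mxE;
  [rewrite -[RHS]w00 | rewrite -[RHS]w10 | rewrite -[RHS]w20];
  by congr (w _ _); apply: val_inj.
Qed.

End SIRS.

Theorem theorem5 (R : realType) (betaA betaB tauI tauR tauP k IbarA IbarB : R) :
  0 < betaA -> 0 < betaB -> 0 < tauI -> 0 < tauR -> 0 < tauP -> 0 < k ->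
  1 < betaA * tauI -> 1 < betaB * tauI ->
  (* IbarA, IbarB : the unique positive solutions of the defining equations *)
  0 < IbarA -> expR (k * IbarA) = betaA * tauI - betaA * (tauI + tauR) * IbarA ->
  0 < IbarB -> expR (k * IbarB) = betaB * tauI - betaB * (tauI + tauR) * IbarB ->
  loc_asymp_stable (field betaA betaB tauI tauR tauP k)
                   (endemic_eq tauI tauR IbarA IbarB).
Proof.
(* [R0 > 1] only ensures that the positive [Ibar]s exist; here they are given. *)
move=> betaA_gt0 betaB_gt0 tauI_gt0 tauR_gt0 tauP_gt0 k_gt0 _ _ IA_gt0 eqA IB_gt0 eqB z.
rewrite jacobian_field (@map_block_mx R _ _ 3 3 3 3) !map_mx0.
case/(@eigenvalue_block_diag _ 3 3); apply: sirs_jacobian_eigenvalue_Re_lt0;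
  rewrite // !mxE !inordK //=; exact: endemic_balance.
Qed.
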